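(* Let $\mathcal{I}=\{(i\mid A_i): i\in[m]\}$ be an index coding instance and let $|A|_{\min}=\min_{i\in[m]}|A_i|$. Then for every execution of the UMCD algorithm on $\mathcal{I}$ (with arbitrary tie-breaking), its output satisfies $$\beta_{\text{UMCD}}(\mathcal{I})\le \beta_{\text{MDS}}(\mathcal{I}) = m-|A|_{\min}.$$
   Context: An index coding instance consists of a positive integer $m$ and, for each receiver $i\in[m]=\{1,\dots,m\}$ (who wants message $x_i$), a side-information set $A_i\subseteq[m]\setminus\{i\}$. Write $B_i=[m]\setminus(A_i\cup\{i\})$ (interfering set). For a $0/1$ matrix $\boldsymbol{G}$ with rows indexed by $[r]$ and columns by $[m]$, $\boldsymbol{G}_{[k]}^{L}$ denotes the submatrix formed by the first $k$ rows and the columns indexed by $L\subseteq[m]$, and $\mathrm{mcm}(\boldsymbol{G})$ denotes the maximum number of entries equal to $1$ of $\boldsymbol{G}$ no two of which lie in the same row or the same column (the size of a maximum matching in the bipartite graph between rows and columns with an edge wherever the entry is $1$); a matrix with no columns has $\mathrm{mcm}=0$. UMCD algorithm: start with $N=[m]$, $k=0$. While $N\neq\emptyset$: set $k\leftarrow k+1$; choose $w\in N$ with $|A_w|=\min_{i\in N}|A_i|$ (ties broken arbitrarily); let the $k$-th row of $\boldsymbol{G}$ be the indicator vector of $\{w\}\cup A_w$ (entry $1$ in the columns of $\{w\}\cup A_w$, $0$ elsewhere); remove $w$ from $N$; then remove from $N$ every $i\in N$ with $\mathrm{mcm}(\boldsymbol{G}_{[k]}^{\{i\}\cup B_i})=\mathrm{mcm}(\boldsymbol{G}_{[k]}^{B_i})+1$.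 When $N=\emptyset$ the algorithm outputs $\beta_{\text{UMCD}}(\mathcal{I})=k$. *)

From mathcomp Require Import all_boot.
Set Implicit Arguments. Unset Printing Implicit Defensive.

(* An index coding instance on m receivers: A i is the side-information set of
   receiver i (required: i \notin A i). *)

Definition interf (m : nat) (A : 'I_m -> {set 'I_m}) (i : 'I_m) : {set 'I_m} :=
  ~: (i |: A i).

(* The 0/1 matrix G with k rows is represented by the sequence of its rows,
   each row being the set of columns carrying a 1. A matching of the submatrix
   G^L (all rows of G, columns in L) is a set of (row, column) positions with
   entry 1, column in L, no two in the same row or column. *)
Definition is_matching (m : nat) (rows : seq {set 'I_m}) (L : {set 'I_m})
    (M : {set 'I_(size rows) * 'I_m}) : bool :=
  [forall p in M, (p.2 \in L) && (p.2 \in nth set0 rows p.1)] &&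
  [forall p in M, forall q in M, ((p.1 == q.1) ==> (p == q)) && ((p.2 == q.2) ==> (p == q))].

Definition mcm (m : nat) (rows : seq {set 'I_m}) (L : {set 'I_m}) : nat :=
  \max_(M : {set 'I_(size rows) * 'I_m} | is_matching rows L M) #|M|.

(* umcd_from A N rows k : starting from the current set N of unsatisfied
   receivers and the rows of G built so far, some execution of the UMCD loop
   (with arbitrary tie-breaking) terminates with output k (= number of rows). *)
Inductive umcd_from (m : nat) (A : 'I_m -> {set 'I_m}) :
    {set 'I_m} -> seq {set 'I_m} -> nat -> Prop :=
  | umcd_stop (rows : seq {set 'I_m}) :
      umcd_from A set0 rows (size rows)
  | umcd_step (N : {set 'I_m}) (rows : seq {set 'I_m}) (w : 'I_m) (k : nat) :
      w \in N ->
      (forall i, i \in N -> #|A w| <= #|A i|) ->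
      umcd_from A
        [set i in N :\ w |
           mcm (rcons rows (w |: A w)) (i |: interf A i)
             != (mcm (rcons rows (w |: A w)) (interf A i)).+1]
        (rcons rows (w |: A w)) k ->
      umcd_from A N rows k.

Definition umcd_output (m : nat) (A : 'I_m -> {set 'I_m}) (k : nat) : Prop :=
  umcd_from A [set: 'I_m] [::] k.

(* |A|_min = min_i |A_i| (for m > 0; the seed m is never smaller since |A_i| < m). *)
Definition Amin (m : nat) (A : 'I_m -> {set 'I_m}) : nat :=
  \big[minn/m]_(i : 'I_m) #|A i|.

Definition beta_MDS (m : nat) (A : 'I_m -> {set 'I_m}) : nat := m - Amin A.

From mathcomp Require Import all_boot zify.
Set Implicit Arguments. Unset Strict Implicit. Unset Printing Implicit Defensive.

(* Let a = |A|_min and say that a sequence of rows (sets of columns) has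
   surplus a when every nonempty set of k of its rows covers at least k + a
   columns.  The empty matrix has surplus a, and every UMCD step preserves it:
   if the new row {w} u A_w (with |A_w| >= a) were covered by a tight set of
   k old rows, i.e. by exactly k + a columns, then the vertex-cover bound for
   these rows, together with Hall's theorem applied to all rows with a columns
   of A_w deleted, would force mcm(G^{~A_w}) = mcm(G^{B_w}) + 1: receiver w
   would already have been satisfied.  At the end the k rows cover at most m
   columns, so k + a <= m. *)

Section Hall.
Variables I T : finType.
Implicit Types (E : I -> {set T}) (P S : {set I}) (X : {set T}).

Definition hall_condition E P :=
  forall S, S \subset P -> #|S| <= #|\bigcup_(i in S) E i|.

Definition sdr E P (f : I -> T) :=
  {in P &, injective f} /\ {in P, forall i, f i \in E i}.

Lemma setD_bigcup S E X :
  (\bigcup_(i in S) E i) :\: X = \bigcup_(i in S) (E i :\: X).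
Proof.
by apply: (big_morph (fun A : {set T} => A :\: X)) => [A B|]; rewrite ?setDUl ?set0D.
Qed.

Lemma sdr_glue E P S X f g :
    S \subset P -> sdr E S f -> {in S, forall i, f i \in X} ->
    sdr (fun i => E i :\: X) (P :\: S) g ->
  sdr E P (fun i => if i \in S then f i else g i).
Proof.
move=> sSP [f_inj fE] fX [g_inj gE].
have gP i : i \in P -> i \notin S -> (g i \notin X) && (g i \in E i).
  by move=> iP iS; rewrite -in_setD gE // in_setD iS.
split=> [i j iP jP | i iP] /=.
  case: (boolP (i \in S)) => iS; case: (boolP (j \in S)) => jS.
  - exact: f_inj.
  - by move=> fg; have /andP[] := gP j jP jS; rewrite -fg fX.
  - by move=> gf; have /andP[] := gP i iP iS; rewrite gf fX.
  - by apply: g_inj; rewrite in_setD ?iS ?jS.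
by case: ifPn => iS; [apply: fE | case/andP: (gP i iP iS)].
Qed.

Lemma hall_condition_tight E P S :
    hall_condition E P -> S \subset P -> #|\bigcup_(i in S) E i| <= #|S| ->
  hall_condition (fun i => E i :\: \bigcup_(j in S) E j) (P :\: S).
Proof.
move=> hallP sSP tight S' sS'PS; rewrite -setD_bigcup.
set N := \bigcup_(j in S) E j in tight *; set N' := \bigcup_(i in S') E i.
have disj : S' :&: S = set0.
  apply/setP=> i; rewrite !inE; apply/negP=> /andP[/(subsetP sS'PS)].
  by rewrite inE => /andP[/negbTE->].
have := hallP (S' :|: S).
rewrite subUset sSP andbT (subset_trans sS'PS (subsetDl P S)) bigcup_setU -/N -/N'.
move=> /(_ isT); have := cardsU S' S; rewrite disj cards0.
have := cardsU N' N; have := cardsD N' N; have := subset_leq_card (subsetIl N' N).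
lia.
Qed.

Lemma hall_condition_loose E P p c :
    (forall S, S \proper P -> S != set0 -> #|S| < #|\bigcup_(i in S) E i|) ->
    p \in P ->
  hall_condition (fun i => E i :\ c) (P :\ p).
Proof.
move=> loose pP S sSP; rewrite -setD_bigcup.
have [->|S0] := eqVneq S set0; first by rewrite cards0.
have := loose S (sub_proper_trans sSP (properD1 pP)) S0.
have := cardsD1 c (\bigcup_(i in S) E i); lia.
Qed.

Theorem hall_marriage (x0 : T) E P : hall_condition E P -> exists f, sdr E P f.
Proof.
have [n] := ubnP #|P|; elim: n E P => // n IH E P /ltnSE leP hallP.
have [->|/set0Pn[p pP]] := eqVneq P set0.
  by exists (fun=> x0); split=> i; rewrite inE.
case: (pickP [pred S : {set I} |
         [&& S \proper P, S != set0 & #|\bigcup_(i in S) E i| <= #|S|]]).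
- move=> S /and3P[SP S0 tight]; have sSP := proper_sub SP.
  have [f fS] := IH E S (leq_trans (proper_card SP) leP)
                        (fun S' sS' => hallP S' (subset_trans sS' sSP)).
  have [|g gP] := IH _ (P :\: S) _ (hall_condition_tight hallP sSP tight).
    move: leP S0; rewrite -(cardsID S P) (setIidPr sSP) -card_gt0; lia.
  exists (fun i => if i \in S then f i else g i); apply: (sdr_glue sSP fS _ gP).
  by move=> i iS; apply/bigcupP; exists i => //; apply: fS.2.
- move=> none; have loose S : S \proper P -> S != set0 ->
      #|S| < #|\bigcup_(i in S) E i|.
    by move=> SP S0; have /negbT := none S; rewrite /= SP S0 ltnNge.
  have /set0Pn[c cE] : E p != set0.
    rewrite -card_gt0; have := hallP [set p].
    by rewrite sub1set pP big_set1 cards1; apply.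
  have [|g gP] := IH _ (P :\ p) _ (hall_condition_loose c loose pP).
    by move: leP; rewrite (cardsD1 p P) pP.
  exists (fun i => if i \in [set p] then c else g i).
  apply: (sdr_glue _ _ _ gP) => [|| i _]; last exact: set11.
  - by rewrite sub1set.
  - by split=> [i j /set1P-> /set1P->|i /set1P->].
Qed.

End Hall.

Lemma card_ords_in_seq n (s : seq nat) :
  uniq s -> all (fun j => j < n) s -> #|[set j : 'I_n | val j \in s]| = size s.
Proof.
move=> s_uniq s_lt.
have -> : [set j : 'I_n | val j \in s] = [set j in pmap insub s].
  by apply/setP=> j; rewrite !inE mem_pmap_sub.
rewrite cardsE (card_uniqP (pmap_sub_uniq _ s_uniq)) size_pmap_sub.
by apply/eqP; rewrite -all_count.
Qed.

Section Matching.
Variable m : nat.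
Implicit Types (rows : seq {set 'I_m}) (L X Y : {set 'I_m}) (s t : seq nat).
Local Notation positions rows := {set 'I_(size rows) * 'I_m}.

Lemma matchingP rows L (M : positions rows) :
  reflect [/\ {in M, forall p, p.2 \in L},
              {in M, forall p : 'I_(size rows) * 'I_m, p.2 \in nth set0 rows p.1},
              {in M &, injective fst} & {in M &, injective snd}]
          (is_matching rows L M).
Proof.
apply: (iffP andP) => [[/forall_inP edge /forall_inP inj] | [inL inRow fst_inj snd_inj]].
  have injP p q : p \in M -> q \in M ->
      ((p.1 == q.1) ==> (p == q)) && ((p.2 == q.2) ==> (p == q)).
    by move=> pM qM; apply: (forall_inP (inj p pM)).
  split=> [p /edge/andP[] // | p /edge/andP[] // | p q pM qM e | p q pM qM e].
    by apply/eqP; have /andP[/implyP-> //] := injP p q pM qM; rewrite e.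
  by apply/eqP; have /andP[_ /implyP-> //] := injP p q pM qM; rewrite e.
split; apply/forall_inP=> p pM; first by rewrite inL // inRow.
apply/forall_inP=> q qM; apply/andP.
by split; apply/implyP=> /eqP e; apply/eqP; [apply: fst_inj | apply: snd_inj].
Qed.

Lemma leq_mcm rows L (M : positions rows) :
  is_matching rows L M -> #|M| <= mcm rows L.
Proof. exact: leq_bigmax_cond. Qed.

Lemma mcm_matching rows L : exists2 M, is_matching rows L M & #|M| = mcm rows L.
Proof.
have : 0 < #|[pred M : positions rows | is_matching rows L M]|.
  by apply/card_gt0P; exists set0; apply/matchingP; split=> p; rewrite inE.
case/(eq_bigmax_cond (fun M : positions rows => #|M|)) => M MP eM.
by exists M; rewrite // /mcm eM.
Qed.

Lemma mcm_nil L : mcm [::] L = 0.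
Proof.
apply/eqP; rewrite -leqn0; apply/bigmax_leqP => M _.
by have := max_card M; rewrite card_prod card_ord.
Qed.

Lemma mcm_setU1 rows x L : mcm rows (x |: L) <= (mcm rows L).+1.
Proof.
have [M /matchingP[inL inRow fst_inj snd_inj] <-] := mcm_matching rows (x |: L).
set Mx : positions rows := [set p | p.2 == x].
have subM : {subset M :\: Mx <= M} by move=> p /setDP[].
have matchL : is_matching rows L (M :\: Mx).
  apply/matchingP; split.
  - move=> p; rewrite !inE => /andP[px /inL]; rewrite in_setU1.
    by case/orP=> // /eqP pxE; rewrite pxE eqxx in px.
  - by move=> p /subM/inRow.
  - by move=> p q /subM pM /subM; apply: fst_inj.
  - by move=> p q /subM pM /subM; apply: snd_inj.
have : #|M :&: Mx| <= 1.
  apply/card_le1_eqP=> p q; rewrite !inE => /andP[pM /eqP px] /andP[qM /eqP qx].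
  by apply: snd_inj; rewrite // px qx.
by rewrite -(cardsID Mx M) -add1n => /leq_add; apply; apply: leq_mcm.
Qed.

Definition row_support rows s : {set 'I_m} :=
  \bigcup_(j <- s) nth set0 rows j.

Lemma row_support_nil rows : row_support rows [::] = set0.
Proof. exact: big_nil. Qed.

Lemma row_support_cons rows j s :
  row_support rows (j :: s) = nth set0 rows j :|: row_support rows s.
Proof. exact: big_cons. Qed.

Lemma perm_row_support rows s t :
  perm_eq s t -> row_support rows s = row_support rows t.
Proof. exact: perm_big. Qed.

Lemma row_support_sub rows s j :
  j \in s -> nth set0 rows j \subset row_support rows s.
Proof. by move=> js; rewrite /row_support (big_rem j) //= subsetUl. Qed.

(* The rows outside s and the columns of L covered by s form a vertex cover. *)
Lemma mcm_row_support rows L s :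
    uniq s -> all (fun j => j < size rows) s ->
  mcm rows L + size s <= size rows + #|row_support rows s :&: L|.
Proof.
move=> s_uniq s_lt.
have [M /matchingP[inL inRow fst_inj snd_inj] <-] := mcm_matching rows L.
set K : positions rows := [set p | val p.1 \in s].
have inside : #|M :&: K| <= #|row_support rows s :&: L|.
  have injI : {in M :&: K &, injective snd}.
    by move=> p q /setIP[pM _] /setIP[qM _]; apply: snd_inj.
  rewrite -(card_in_imset injI).
  apply/subset_leq_card/subsetP=> _ /imsetP[p /setIP[pM pK] ->].
  rewrite inE in pK; rewrite inE inL // andbT.
  exact: subsetP (row_support_sub rows pK) _ (inRow p pM).
have outside : #|M :\: K| + size s <= size rows.
  have injD : {in M :\: K &, injective fst}.
    by move=> p q /setDP[pM _] /setDP[qM _]; apply: fst_inj.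
  rewrite -(card_in_imset injD).
  set C : {set 'I_(size rows)} := [set j | val j \in s].
  have cardC : #|C| = size s by exact: card_ords_in_seq.
  apply: leq_trans (_ : #|~: C| + #|C| <= _); last by rewrite addnC cardsC card_ord.
  rewrite cardC leq_add2r.
  apply/subset_leq_card/subsetP=> _ /imsetP[p /setDP[_ pK] ->].
  by rewrite !inE; rewrite inE in pK.
rewrite -(cardsID K M); lia.
Qed.

(* Sets of rows are duplicate-free lists of row indices rather than sets of
   ordinals, so that they keep their meaning when a row is appended. *)
Definition has_surplus a rows :=
  forall s : seq nat, uniq s -> s != [::] -> all (fun j => j < size rows) s ->
  size s + a <= #|row_support rows s|.

Lemma has_surplus_nil a : has_surplus a [::].
Proof. by case. Qed.

Lemma has_surplus_size rows a : has_surplus a rows -> a <= m -> size rows + a <= m.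
Proof.
case: rows => [|r rows] surplus am; first by rewrite add0n.
have all_lt : all (fun j => j < size (r :: rows)) (iota 0 (size (r :: rows))).
  by apply/allP=> j; rewrite mem_iota.
have := surplus _ (iota_uniq 0 (size (r :: rows))) isT all_lt.
rewrite size_iota => /leq_trans.
by apply; apply: leq_trans (max_card _) (eq_leq (card_ord m)).
Qed.

Lemma hall_condition_surplus rows a Y :
    has_surplus a rows -> #|Y| <= a ->
  hall_condition (fun j : 'I_(size rows) => nth set0 rows j :\: Y) setT.
Proof.
move=> surplus Ya S _; rewrite -setD_bigcup.
have [->|S0] := eqVneq S set0; first by rewrite cards0.
set sq := [seq val j | j <- enum S].
have sq_uniq : uniq sq by rewrite (map_inj_uniq val_inj) enum_uniq.
have sq_size : size sq = #|S| by rewrite size_map cardE.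
have sq_lt : all (fun j => j < size rows) sq.
  by apply/allP=> _ /mapP[j _ ->]; apply: ltn_ord.
have := surplus sq sq_uniq; rewrite -size_eq0 sq_size cards_eq0 S0.
move=> /(_ isT sq_lt); rewrite /row_support big_map big_enum /=.
move: (\bigcup_(i in S) _) => U le_SU.
have le_UY : #|U :&: Y| <= a.
  by apply: leq_trans Ya; rewrite subset_leq_card ?subsetIr.
rewrite cardsD leq_subRL ?subset_leq_card ?subsetIl // addnC.
exact: leq_trans (leq_add (leqnn _) le_UY) le_SU.
Qed.

(* Hall's theorem, after deleting a columns of X, matches every row; the rows
   matched inside X use distinct columns among the remaining #|X| - a. *)
Lemma mcm_surplus rows a X :
  has_surplus a rows -> a <= #|X| -> size rows + a <= mcm rows (~: X) + #|X|.
Proof.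
move=> surplus aX; have [rows0|rows_gt0] := posnP (size rows).
  by rewrite rows0 add0n (leq_trans aX) ?leq_addl.
have /set0Pn[x0 _] : row_support rows [:: 0] != set0.
  by rewrite -card_gt0 (leq_trans _ (surplus [:: 0] _ _ _)) //= andbT.
have /card_geqP[del [del_uniq del_size delX]] := aX.
set Y := [set x in del].
have cardY : #|Y| = a by rewrite cardsE (card_uniqP del_uniq).
have YX : Y \subset X by apply/subsetP=> x; rewrite inE => /delX.
have hallE := hall_condition_surplus surplus (eq_leq cardY).
have [f [f_inj fE]] := hall_marriage x0 hallE.
set R := [set j | f j \notin X].
have matchR : is_matching rows (~: X) [set (j, f j) | j in R].
  apply/matchingP; split.
  - by move=> _ /imsetP[j jR ->]; rewrite inE; rewrite inE in jR.
  - by move=> _ /imsetP[j _ ->]; case/setDP: (fE j (in_setT j)).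
  - by move=> _ _ /imsetP[i _ ->] /imsetP[j _ ->] /= ->.
  - by move=> _ _ /imsetP[i _ ->] /imsetP[j _ ->] /= /f_inj->; rewrite ?in_setT.
have cardM : #|[set (j, f j) | j in R]| = #|R| by apply: card_imset => i j [].
have cardRc : #|~: R| <= #|X| - a.
  rewrite -cardY -(setIidPr YX) -cardsD.
  have f_injC : {in ~: R &, injective f}.
    by move=> i j _ _; apply: f_inj; rewrite in_setT.
  rewrite -(card_in_imset f_injC).
  apply/subset_leq_card/subsetP=> _ /imsetP[j jR ->].
  have /setDP[_ fjY] := fE j (in_setT j).
  by rewrite in_setD fjY; rewrite !inE negbK in jR.
have := leq_mcm matchR; rewrite cardM.
have := cardsC R; rewrite card_ord; lia.
Qed.

Lemma tight_cover_decodes rows a s w X :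
    has_surplus a rows -> a <= #|X| -> w \notin X ->
    uniq s -> all (fun j => j < size rows) s ->
    w |: X \subset row_support rows s -> #|row_support rows s| = size s + a ->
  mcm rows (~: X) = (mcm rows (~: (w |: X))).+1.
Proof.
move=> surplus aX wX s_uniq s_lt rU tight.
have upper : mcm rows (~: (w |: X)) + size s <=
             size rows + #|row_support rows s :&: ~: (w |: X)|.
  exact: mcm_row_support.
have lower : size rows + a <= mcm rows (~: X) + #|X| := mcm_surplus surplus aX.
have step : mcm rows (~: X) <= (mcm rows (~: (w |: X))).+1.
  suff -> : ~: X = w |: ~: (w |: X) by apply: mcm_setU1.
  by apply/setP=> x; rewrite !inE; case: eqVneq => // ->.
have card_wX : #|w |: X| = #|X|.+1 by rewrite cardsU1 wX.
have le_wX : #|X|.+1 <= size s + a by rewrite -card_wX -tight subset_leq_card.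
rewrite -setDE cardsD (setIidPr rU) tight card_wX in upper.
lia.
Qed.

Lemma has_surplus_rcons rows a w X :
    has_surplus a rows -> a <= #|X| -> w \notin X ->
    mcm rows (~: X) != (mcm rows (~: (w |: X))).+1 ->
  has_surplus a (rcons rows (w |: X)).
Proof.
move=> surplus aX wX undecoded s s_uniq s0; rewrite size_rcons => s_lt.
set r := w |: X.
have old_rows t : all (fun j => j < size rows) t ->
    row_support (rcons rows r) t = row_support rows t.
  by move=> /allP t_lt; apply: eq_big_seq => j /t_lt j_lt; rewrite nth_rcons j_lt.
have [new|old] := boolP (size rows \in s); last first.
  have s_lt' : all (fun j => j < size rows) s.
    apply/allP=> j js; have := allP s_lt j js; rewrite ltnS leq_eqVlt.
    by case/predU1P=> // jn; rewrite -jn js in old.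
  by rewrite old_rows //; apply: surplus.
set s' := rem (size rows) s.
have perm_s : perm_eq s (size rows :: s') := perm_to_rem new.
have s'_uniq : uniq s' := rem_uniq _ s_uniq.
have s'_lt : all (fun j => j < size rows) s'.
  apply/allP=> j; rewrite mem_rem_uniq // inE => /andP[jn js].
  by have := allP s_lt j js; rewrite ltnS leq_eqVlt (negbTE jn).
rewrite (perm_size perm_s) (perm_row_support _ perm_s) row_support_cons.
rewrite nth_rcons ltnn eqxx old_rows //.
have [-> | s'0] := eqVneq s' [::].
  by rewrite row_support_nil setU0 cardsU1 wX.
set U := row_support rows s'.
have U_big : size s' + a <= #|U| := surplus s' s'_uniq s'0 s'_lt.
rewrite leqNgt; apply/negP => /= small; apply: (negP undecoded); apply/eqP.
have U_rU : #|U| <= #|r :|: U| := subset_leq_card (subsetUr r U).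
have rU : r \subset U.
  have /eqP-> : U == r :|: U.
    by rewrite eqEcard subsetUr /= -ltnS (leq_trans small) // addSn ltnS.
  exact: subsetUl.
apply: tight_cover_decodes surplus aX wX s'_uniq s'_lt rU _.
by apply/eqP; rewrite eqn_leq U_big andbT -ltnS -addSn (leq_ltn_trans U_rU small).
Qed.
End Matching.

Section Run.
Variables (m : nat) (A : 'I_m -> {set 'I_m}).
Hypothesis A_irr : forall i, i \notin A i.

Lemma setU1_interf i : i |: interf A i = ~: A i.
Proof.
by apply/setP=> x; rewrite !inE; case: eqVneq => [->|]; rewrite ?A_irr.
Qed.

Lemma Amin_leq_card i : Amin A <= #|A i|.
Proof.
rewrite /Amin; elim: (index_enum _) (mem_index_enum i) => // j r IH.
rewrite inE big_cons => /predU1P[<- | /IH]; first exact: geq_minl.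
exact: leq_trans (geq_minr _ _).
Qed.

Lemma Amin_leq_m : Amin A <= m.
Proof.
rewrite /Amin; elim/big_ind: _ => // [x y le_x _ | i _].
  exact: leq_trans (geq_minl x y) le_x.
exact: leq_trans (max_card _) (eq_leq (card_ord m)).
Qed.

Lemma umcd_from_bound N rows k :
    umcd_from A N rows k ->
    {in N, forall i, mcm rows (i |: interf A i) != (mcm rows (interf A i)).+1} ->
    has_surplus (Amin A) rows ->
  k + Amin A <= m.
Proof.
elim=> {N rows k} [rows _ surplus | N rows w k wN _ _ IH undecoded surplus].
  exact: has_surplus_size surplus Amin_leq_m.
apply: IH => [i | ]; first by rewrite inE => /andP[].
apply: has_surplus_rcons => //; first exact: Amin_leq_card.
by have := undecoded w wN; rewrite setU1_interf.
Qed.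

End Run.

Theorem theorem3 (m : nat) (A : 'I_m -> {set 'I_m})
    (hA : forall i : 'I_m, i \notin A i) (k : nat) :
  umcd_output A k -> k <= beta_MDS A /\ beta_MDS A = m - Amin A.
Proof.
move=> run; split=> //; rewrite /beta_MDS leq_subRL ?Amin_leq_m // addnC.
apply: (umcd_from_bound hA run); last exact: has_surplus_nil.
by move=> i _; rewrite !mcm_nil.
Qed.
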